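(* Let $A$ be a Banach algebra such that $A^2=\mathrm{span}\{ab:a,b\in A\}$ is dense in $A$. Then, as vector spaces, $$\mathcal H^1(A\bowtie^{\mathrm{id}}A,(A\bowtie^{\mathrm{id}}A)^* )\cong\mathcal H^1(A,A^* )\oplus\mathcal H^1(A,A^* ).$$
   Context: $A\bowtie^{\mathrm{id}}A$ is the Banach space $\{(a,b):a,b\in A\}$ with norm $\|a\|+\|b\|$ and product $(a,b)(a',b')=(aa',\ ab'+ba'+bb')$. For a Banach algebra $C$, $C^*$ is a $C$-bimodule via $\langle c\cdot f,x\rangle=f(xc)$, $\langle f\cdot c,x\rangle=f(cx)$; $\mathcal Z^1(C,C^* )$ is the space of bounded derivations $D:C\to C^*$ ($D(xy)=x\cdot D(y)+D(x)\cdot y$), $\mathcal B^1(C,C^* )$ the inner derivations $c\mapsto c\cdot f-f\cdot c$ ($f\in C^*$), and $\mathcal H^1(C,C^* )=\mathcal Z^1(C,C^* )/\mathcal B^1(C,C^* )$. *)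

From Stdlib Require Import Reals.
From HB Require Import structures.
From mathcomp Require Import all_boot all_order all_algebra.
Set Implicit Arguments. Unset Strict Implicit. Unset Printing Implicit Defensive.
Import GRing.Theory.
Local Open Scope ring_scope.

Section Defs.
Variable K : fieldType.

Definition is_absval (nrm : K -> R) : Prop :=
  [/\ (forall a : K, Rle R0 (nrm a)),
      (forall a : K, nrm a = R0 <-> a = 0),
      (forall a b : K, nrm (a * b) = Rmult (nrm a) (nrm b))
    & (forall a b : K, Rle (nrm (a + b)) (Rplus (nrm a) (nrm b)))].

Variable nrm : K -> R.
Variable V : lmodType K.

Definition is_banach_algebra (mul : V -> V -> V) (nV : V -> R) : Prop :=
  (forall (a : K) (x y z : V), mul (a *: x + y) z = a *: mul x z + mul y z)/\
      (forall (a : K) (x y z : V), mul z (a *: x + y) = a *: mul z x + mul z y)/\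
      (forall x y z : V, mul x (mul y z) = mul (mul x y) z)/\
      (forall x : V, Rle R0 (nV x))/\
      (forall x : V, nV x = R0 -> x = 0)/\
      (forall x y : V, Rle (nV (x + y)) (Rplus (nV x) (nV y)))/\
      (forall (a : K) (x : V), nV (a *: x) = Rmult (nrm a) (nV x))/\
      (forall x y : V, Rle (nV (mul x y)) (Rmult (nV x) (nV y)))/\
      (forall u : nat -> V,
         (forall eps, Rlt R0 eps -> exists N : nat, forall m n : nat,
              (N <= m)%N -> (N <= n)%N -> Rlt (nV (u m - u n)) eps) ->
         exists l : V, forall eps, Rlt R0 eps -> exists N : nat, forall n : nat,
              (N <= n)%N -> Rlt (nV (u n - l)) eps).

Definition square_dense (mul : V -> V -> V) (nV : V -> R) : Prop :=
  forall (x : V) (eps : R), Rlt R0 eps ->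
    exists s : seq (K * (V * V)),
      Rlt (nV (x - \sum_(p <- s) p.1 *: mul p.2.1 p.2.2)) eps.

Definition is_bdd_functional (nV : V -> R) (f : V -> K) : Prop :=
  (forall (a : K) (x y : V), f (a *: x + y) = a * f x + f y) /\
  (exists M : R, forall x : V, Rle (nrm (f x)) (Rmult M (nV x))).

(* Z^1(V, V^* ) : bounded derivations D : V -> V^*, where D c is the functional
   z |-> D c z, and the bimodule actions are <c.f, z> = f(zc), <f.c, z> = f(cz). *)
Definition is_bdd_derivation (mul : V -> V -> V) (nV : V -> R)
    (D : V -> V -> K) : Prop :=
  [/\ (forall (a : K) (x y z : V), D (a *: x + y) z = a * D x z + D y z),
      (forall c : V, is_bdd_functional nV (D c)),
      (exists M : R, forall c z : V,
          Rle (nrm (D c z)) (Rmult M (Rmult (nV c) (nV z))))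
    &
      (forall x y z : V, D (mul x y) z = D y (mul z x) + D x (mul y z))].

Definition is_inner_derivation (mul : V -> V -> V) (nV : V -> R)
    (D : V -> V -> K) : Prop :=
  exists f : V -> K, is_bdd_functional nV f /\
    forall c z : V, D c z = f (mul z c) - f (mul c z).

End Defs.

Definition bowtie_mul (K : fieldType) (V : lmodType K) (mul : V -> V -> V)
  (p q : V * V) : V * V :=
  (mul p.1 q.1, mul p.1 q.2 + mul p.2 q.1 + mul p.2 q.2).

Definition bowtie_norm (K : fieldType) (V : lmodType K) (nV : V -> R)
  (p : V * V) : R := Rplus (nV p.1) (nV p.2).

(* Vector-space isomorphism  Z1/B1 ≅ (Z2/B2) ⊕ (Z2/B2), expressed through a
   linear map Phi : Z1 -> Z2 x Z2 on representatives which induces a linear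
   bijection of the quotient spaces:
   - Phi is linear on Z1 and maps Z1 into Z2 x Z2,
   - the induced map is surjective (every pair of classes is hit),
   - the induced map is well defined and injective: Phi D in B2 x B2 iff D in B1. *)
Definition H1_iso_direct_sum (K : fieldType) (X Y : Type)
    (Z1 B1 : (X -> X -> K) -> Prop) (Z2 B2 : (Y -> Y -> K) -> Prop) : Prop :=
  exists Phi : (X -> X -> K) -> (Y -> Y -> K) * (Y -> Y -> K),
  [/\ (forall (a : K) (D D' : X -> X -> K), Z1 D -> Z1 D' ->
         Phi (fun c z => a * D c z + D' c z) =
         ((fun x y => a * (Phi D).1 x y + (Phi D').1 x y),
          (fun x y => a * (Phi D).2 x y + (Phi D').2 x y))),
      (forall D, Z1 D -> Z2 (Phi D).1 /\ Z2 (Phi D).2),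
      (forall D1 D2, Z2 D1 -> Z2 D2 -> exists D, Z1 D /\
          B2 (fun x y => (Phi D).1 x y - D1 x y) /\
          B2 (fun x y => (Phi D).2 x y - D2 x y))
    & (forall D, Z1 D -> (B2 (Phi D).1 /\ B2 (Phi D).2 <-> B1 D))].

(* (a, b) |-> (a, a + b) is a bounded algebra isomorphism from A ⋈^id A onto
   the direct product A × A, with inverse (x, y) |-> (x, y - x).  A bounded
   derivation D of A × A is determined by its restrictions to the two factors
   once the cross terms D(u)(v), with u and v in different factors, vanish:
   since the factors annihilate each other, the derivation identity gives
   D(u)(ab) = 0, and boundedness with the density of A^2 extends this to every
   v.  Restriction to the factors therefore identifies Z^1 with Z^1 × Z^1, and
   inner derivations correspond to pairs of inner derivations. *)
From Stdlib Require Import Reals Lra.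
From HB Require Import structures.
From mathcomp Require Import all_boot all_order all_algebra.

Set Implicit Arguments. Unset Strict Implicit. Unset Printing Implicit Defensive.
Import GRing.Theory.

Section RealBounds.
Local Open Scope R_scope.

Lemma Rle_eps_eq0 (C r : R) : 0 <= C -> 0 <= r ->
  (forall eps, 0 < eps -> r <= C * eps) -> r = 0.
Proof.
move=> C_ge0 r_ge0 r_small; case: (Rle_lt_or_eq_dec 0 r r_ge0) => [r_gt0|]; last by [].
have eps_gt0 : 0 < r / (2 * (C + 1)) by apply: Rdiv_lt_0_compat; lra.
have eps_eq : r / (2 * (C + 1)) * (2 * (C + 1)) = r by field; lra.
have := r_small _ eps_gt0; nra.
Qed.

Lemma bound_comp (a M X C Y : R) : a <= M * X -> 0 <= X -> X <= C * Y ->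
  a <= (Rmax M 0 * C) * Y.
Proof. by move=> aX X_ge0 XY; have := Rmax_l M 0; have := Rmax_r M 0; nra. Qed.

Lemma bound_comp2 (a M X Y C P Q : R) : a <= M * (X * Y) -> 0 <= X -> 0 <= Y ->
  X <= C * P -> Y <= C * Q -> a <= (Rmax M 0 * C * C) * (P * Q).
Proof.
move=> aXY X_ge0 Y_ge0 XP YQ.
have XY_le := Rmult_le_compat _ _ _ _ X_ge0 Y_ge0 XP YQ.
have := Rmult_le_compat_r _ _ _ (Rmult_le_pos _ _ X_ge0 Y_ge0) (Rmax_l M 0).
have := Rmult_le_compat_l _ _ _ (Rmax_r M 0) XY_le.
nra.
Qed.

Lemma bound_add (a b c M N X : R) : a <= b + c -> b <= M * X -> c <= N * X ->
  0 <= X -> a <= (Rmax M 0 + Rmax N 0) * X.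
Proof. by move=> *; have := Rmax_l M 0; have := Rmax_l N 0; nra. Qed.

End RealBounds.

Local Open Scope ring_scope.

Section LinearMaps.
Variables (K : fieldType) (V W : lmodType K) (f : V -> W).
Hypothesis f_lin : forall a x y, f (a *: x + y) = a *: f x + f y.

Lemma lin_map0 : f 0 = 0.
Proof.
have := f_lin 1 0 0; rewrite !scale1r addr0 => /(congr1 (fun t => t - f 0)).
by rewrite subrr addrK.
Qed.

Lemma lin_mapD x y : f (x + y) = f x + f y.
Proof. by have := f_lin 1 x y; rewrite !scale1r. Qed.

End LinearMaps.

Section BanachAlgebra.
Variables (K : fieldType) (nrm : K -> R) (A : lmodType K).
Variables (mul : A -> A -> A) (nA : A -> R).
Hypothesis A_ba : is_banach_algebra nrm mul nA.

Lemma ba_mulDl x y z : mul (x + y) z = mul x z + mul y z.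
Proof. by case: A_ba => mul_linl _; have := mul_linl 1 x y z; rewrite !scale1r. Qed.

Lemma ba_mulDr x y z : mul z (x + y) = mul z x + mul z y.
Proof. by case: A_ba => _ [mul_linr _]; have := mul_linr 1 x y z; rewrite !scale1r. Qed.

Lemma ba_mulNl x z : mul (- x) z = - mul x z.
Proof.
case: A_ba => mul_linl _; have := mul_linl (-1) x 0 z.
by rewrite addr0 (lin_map0 (fun a x y => mul_linl a x y z)) addr0 !scaleN1r.
Qed.

Lemma ba_mulNr x z : mul z (- x) = - mul z x.
Proof.
case: A_ba => _ [mul_linr _]; have := mul_linr (-1) x 0 z.
by rewrite addr0 (lin_map0 (fun a x y => mul_linr a x y z)) addr0 !scaleN1r.
Qed.

Lemma ba_mul0l z : mul 0 z = 0.
Proof. by case: A_ba => mul_linl _; exact: (lin_map0 (fun a x y => mul_linl a x y z)). Qed.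

Lemma ba_mul0r z : mul z 0 = 0.
Proof. by case: A_ba => _ [mul_linr _]; exact: (lin_map0 (fun a x y => mul_linr a x y z)). Qed.

Lemma ba_norm_ge0 x : Rle R0 (nA x).
Proof. by case: A_ba => _ [_ [_ [? _]]]. Qed.

Lemma ba_normD x y : Rle (nA (x + y)) (Rplus (nA x) (nA y)).
Proof. by case: A_ba => _ [_ [_ [_ [_ [? _]]]]]. Qed.

Lemma ba_normN x : nA (- x) = Rmult (nrm (-1)) (nA x).
Proof. by case: A_ba => _ [_ [_ [_ [_ [_ [normZ _]]]]]]; rewrite -normZ scaleN1r. Qed.

Lemma ba_norm0 : is_absval nrm -> nA 0 = R0.
Proof.
case=> _ nrm_eq0 _ _; case: A_ba => _ [_ [_ [_ [_ [_ [normZ _]]]]]].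
by rewrite -(scale0r 0) normZ (proj2 (nrm_eq0 0) erefl) Rmult_0_l.
Qed.

End BanachAlgebra.

Section Derivations.
Variables (K : fieldType) (nrm : K -> R) (V : lmodType K).
Variables (mulV : V -> V -> V) (nV : V -> R) (D : V -> V -> K).
Hypothesis D_der : is_bdd_derivation nrm mulV nV D.

Lemma derivation_linl z a x y : D (a *: x + y) z = a * D x z + D y z.
Proof. by case: D_der => D_lin _ _ _; exact: D_lin. Qed.

Lemma derivation_linr c a x y : D c (a *: x + y) = a * D c x + D c y.
Proof. by case: D_der => _ Dc_bdd _ _; case: (Dc_bdd c). Qed.

Lemma derivation_leibniz x y z : D (mulV x y) z = D y (mulV z x) + D x (mulV y z).
Proof. by case: D_der. Qed.

Lemma derivation0l z : D 0 z = 0.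
Proof. exact: (@lin_map0 K V K^o _ (derivation_linl z)). Qed.

Lemma derivation0r c : D c 0 = 0.
Proof. exact: (@lin_map0 K V K^o _ (derivation_linr c)). Qed.

Lemma derivationDl x y z : D (x + y) z = D x z + D y z.
Proof. exact: (@lin_mapD K V K^o _ (derivation_linl z)). Qed.

Lemma derivationDr c x y : D c (x + y) = D c x + D c y.
Proof. exact: (@lin_mapD K V K^o _ (derivation_linr c)). Qed.

End Derivations.

Section DerivationSpaces.
Variables (K : fieldType) (nrm : K -> R) (V : lmodType K).
Variables (mulV : V -> V -> V) (nV : V -> R).
Hypothesis nrm_triangle : forall a b, Rle (nrm (a + b)) (Rplus (nrm a) (nrm b)).
Hypothesis nV_ge0 : forall x, Rle R0 (nV x).

Lemma derivation_add D1 D2 :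
  is_bdd_derivation nrm mulV nV D1 -> is_bdd_derivation nrm mulV nV D2 ->
  is_bdd_derivation nrm mulV nV (fun c z => D1 c z + D2 c z).
Proof.
move=> [D1_lin D1_bdd [M1 HM1] D1_leib] [D2_lin D2_bdd [M2 HM2] D2_leib]; split.
- by move=> a x y z; rewrite D1_lin D2_lin mulrDr addrACA.
- move=> c; have [f1_lin [N1 HN1]] := D1_bdd c; have [f2_lin [N2 HN2]] := D2_bdd c.
  split; first by move=> a x y; rewrite f1_lin f2_lin mulrDr addrACA.
  exists (Rplus (Rmax N1 R0) (Rmax N2 R0)) => x.
  exact: bound_add (nrm_triangle _ _) (HN1 _) (HN2 _) (nV_ge0 _).
- exists (Rplus (Rmax M1 R0) (Rmax M2 R0)) => c z.
  apply: bound_add (nrm_triangle _ _) (HM1 _ _) (HM2 _ _) _.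
  exact: Rmult_le_pos.
- by move=> x y z; rewrite D1_leib D2_leib addrACA.
Qed.

Lemma inner_derivation_add D D1 D2 : (forall c z, D c z = D1 c z + D2 c z) ->
  is_inner_derivation nrm mulV nV D1 -> is_inner_derivation nrm mulV nV D2 ->
  is_inner_derivation nrm mulV nV D.
Proof.
move=> D_sum [f1 [[f1_lin [M1 HM1]] D1_inner]] [f2 [[f2_lin [M2 HM2]] D2_inner]].
exists (fun x => f1 x + f2 x); split; first split.
- by move=> a x y; rewrite f1_lin f2_lin mulrDr addrACA.
- exists (Rplus (Rmax M1 R0) (Rmax M2 R0)) => x.
  exact: bound_add (nrm_triangle _ _) (HM1 _) (HM2 _) (nV_ge0 _).
- by move=> c z; rewrite D_sum D1_inner D2_inner opprD addrACA.
Qed.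

Lemma inner_derivation_eq0 D : nrm 0 = R0 ->
  (forall c z, D c z = 0) -> is_inner_derivation nrm mulV nV D.
Proof.
move=> nrm0 D_eq0; exists (fun _ => 0); split; first split.
- by move=> a x y; rewrite mulr0 addr0.
- by exists R0 => x; rewrite nrm0 Rmult_0_l; exact: Rle_refl.
- by move=> c z; rewrite D_eq0 subrr.
Qed.

End DerivationSpaces.

Section BoundedHomomorphisms.
Variables (K : fieldType) (nrm : K -> R) (V W : lmodType K).
Variables (mulV : V -> V -> V) (nV : V -> R) (mulW : W -> W -> W) (nW : W -> R).

Definition is_bdd_hom (e : V -> W) : Prop :=
  [/\ forall a x y, e (a *: x + y) = a *: e x + e y,
      forall x y, mulW (e x) (e y) = e (mulV x y)
    & exists2 C, Rle R0 C & forall x, Rle (nW (e x)) (Rmult C (nV x))].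

Hypothesis nW_ge0 : forall w, Rle R0 (nW w).

Lemma derivation_comp e D : is_bdd_hom e ->
  is_bdd_derivation nrm mulW nW D ->
  is_bdd_derivation nrm mulV nV (fun x y => D (e x) (e y)).
Proof.
move=> [e_lin e_mul [C _ e_bdd]] [D_lin D_bdd [M HM] D_leib]; split.
- by move=> a x y z; rewrite e_lin D_lin.
- move=> c; have [f_lin [N HN]] := D_bdd (e c); split.
    by move=> a x y; rewrite e_lin f_lin.
  exists (Rmult (Rmax N R0) C) => x.
  exact: bound_comp (HN _) (nW_ge0 _) (e_bdd _).
- exists (Rmult (Rmult (Rmax M R0) C) C) => c z.
  exact: bound_comp2 (HM _ _) (nW_ge0 _) (nW_ge0 _) (e_bdd _) (e_bdd _).
- by move=> x y z; rewrite -!e_mul D_leib.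
Qed.

Lemma inner_derivation_comp e D : is_bdd_hom e ->
  is_inner_derivation nrm mulW nW D ->
  is_inner_derivation nrm mulV nV (fun x y => D (e x) (e y)).
Proof.
move=> [e_lin e_mul [C _ e_bdd]] [f [[f_lin [M HM]] D_inner]].
exists (fun x => f (e x)); split; first split.
- by move=> a x y; rewrite e_lin f_lin.
- exists (Rmult (Rmax M R0) C) => x.
  exact: bound_comp (HM _) (nW_ge0 _) (e_bdd _).
- by move=> c z; rewrite D_inner !e_mul.
Qed.

(* The derivation identity at (e q, u, e p) has a vanishing left side and
   second term, so D(u) kills e(A^2). *)
Lemma derivation_annihilator_eq0 e D u :
  is_absval nrm -> square_dense mulV nV -> is_bdd_hom e ->
  (forall x, mulW (e x) u = 0) -> (forall x, mulW u (e x) = 0) ->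
  is_bdd_derivation nrm mulW nW D -> forall y, D u (e y) = 0.
Proof.
move=> [nrm_ge0 nrm_eq0 _ _] dense e_hom eu0 ue0 D_der.
have [e_lin e_mul [C C_ge0 e_bdd]] := e_hom.
have [_ [M HM]] := (let: And4 _ D_bdd _ _ := D_der in D_bdd) u.
have Du_lin := derivation_linr D_der u.
have Du_prod p q : D u (e (mulV p q)) = 0.
  have := derivation_leibniz D_der (e q) u (e p).
  by rewrite eu0 ue0 (derivation0l D_der) (derivation0r D_der) addr0 e_mul => <-.
have Du_span (s : seq (K * (V * V))) :
    D u (e (\sum_(p <- s) p.1 *: mulV p.2.1 p.2.2)) = 0.
  elim: s => [|p s IH]; first by rewrite big_nil lin_map0 // (derivation0r D_der).
  by rewrite big_cons e_lin Du_lin Du_prod IH mulr0 addr0.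
move=> y; apply/nrm_eq0; apply: (@Rle_eps_eq0 (Rmult (Rmax M R0) C)) => //.
  by apply: Rmult_le_pos => //; exact: Rmax_r.
move=> eps eps_gt0; have [s s_close] := dense y eps eps_gt0.
rewrite -(subrK (\sum_(p <- s) p.1 *: mulV p.2.1 p.2.2) y) lin_mapD //.
rewrite (@lin_mapD K W K^o _ Du_lin) Du_span addr0.
apply: Rle_trans (bound_comp (HM _) (nW_ge0 _) (e_bdd _)) _.
apply: Rmult_le_compat_l; last exact: Rlt_le.
by apply: Rmult_le_pos => //; exact: Rmax_r.
Qed.

End BoundedHomomorphisms.

Section Bowtie.
Variables (K : fieldType) (nrm : K -> R) (A : lmodType K).
Variables (mul : A -> A -> A) (nA : A -> R).
Hypothesis nrm_abs : is_absval nrm.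
Hypothesis A_ba : is_banach_algebra nrm mul nA.

Local Notation AA := (A * A)%type.
Local Notation bmul := (bowtie_mul mul).
Local Notation bnorm := (bowtie_norm nA).

(* bowtie_in1 and bowtie_in2 embed the two factors of A × A ≅ A ⋈^id A;
   fst and bowtie_out2 are the corresponding projections. *)
Definition bowtie_in1 (x : A) : AA := (x, - x).
Definition bowtie_in2 (x : A) : AA := (0, x).
Definition bowtie_out2 (c : AA) : A := c.1 + c.2.

Lemma bowtie_norm_ge0 c : Rle R0 (bnorm c).
Proof. by apply: Rplus_le_le_0_compat; exact: ba_norm_ge0 A_ba _. Qed.

Lemma bowtie_in1_hom : is_bdd_hom mul nA bmul bnorm bowtie_in1.
Proof.
split.
- by move=> a x y; apply: injective_projections => //=; rewrite opprD scalerN.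
- move=> x y; rewrite /bowtie_mul /bowtie_in1 /= (ba_mulNl A_ba) !(ba_mulNr A_ba).
  by rewrite (ba_mulNl A_ba) opprK -addrA addNr addr0.
- have [nrm_ge0 _ _ _] := nrm_abs.
  exists (Rplus R1 (nrm (-1))); first by have := nrm_ge0 (-1); lra.
  by move=> x; rewrite /bowtie_norm /= (ba_normN A_ba); lra.
Qed.

Lemma bowtie_in2_hom : is_bdd_hom mul nA bmul bnorm bowtie_in2.
Proof.
split.
- by move=> a x y; apply: injective_projections => //=; rewrite scaler0 addr0.
- move=> x y; rewrite /bowtie_mul /bowtie_in2 /= !(ba_mul0l A_ba) !(ba_mul0r A_ba).
  by rewrite !add0r.
- exists R1; first exact: Rle_0_1.
  by move=> x; rewrite /bowtie_norm /= (ba_norm0 A_ba nrm_abs); lra.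
Qed.

Lemma bowtie_out1_hom : is_bdd_hom bmul bnorm mul nA fst.
Proof.
split=> //; exists R1; first exact: Rle_0_1.
by move=> c; rewrite /bowtie_norm; have := ba_norm_ge0 A_ba c.2; lra.
Qed.

Lemma bowtie_out2_hom : is_bdd_hom bmul bnorm mul nA bowtie_out2.
Proof.
split.
- by move=> a x y; rewrite /bowtie_out2 /= scalerDr addrACA.
- move=> x y; rewrite /bowtie_out2 /bowtie_mul /= (ba_mulDl A_ba) !(ba_mulDr A_ba).
  by rewrite !addrA.
- exists R1; first exact: Rle_0_1.
  by move=> c; rewrite /bowtie_norm /bowtie_out2; have := ba_normD A_ba c.1 c.2; lra.
Qed.

Lemma bowtie_in12_mul x y : bmul (bowtie_in1 x) (bowtie_in2 y) = 0.
Proof.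
rewrite /bowtie_mul /bowtie_in1 /bowtie_in2.
apply: injective_projections => /=; first exact: (ba_mul0r A_ba).
by rewrite (ba_mul0r A_ba) (ba_mulNl A_ba) addr0 addrN.
Qed.

Lemma bowtie_in21_mul x y : bmul (bowtie_in2 y) (bowtie_in1 x) = 0.
Proof.
rewrite /bowtie_mul /bowtie_in1 /bowtie_in2.
apply: injective_projections => /=; first exact: (ba_mul0l A_ba).
by rewrite !(ba_mul0l A_ba) (ba_mulNr A_ba) add0r addrN.
Qed.

Lemma bowtie_decomp c : c = bowtie_in1 c.1 + bowtie_in2 (bowtie_out2 c).
Proof. by apply: injective_projections => /=; rewrite ?addr0 ?addKr. Qed.

Lemma bowtie_derivation_split D : square_dense mul nA ->
  is_bdd_derivation nrm bmul bnorm D -> forall c z,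
  D c z = D (bowtie_in1 c.1) (bowtie_in1 z.1)
        + D (bowtie_in2 (bowtie_out2 c)) (bowtie_in2 (bowtie_out2 z)).
Proof.
move=> dense D_der c z.
have cross12 x y : D (bowtie_in1 x) (bowtie_in2 y) = 0.
  apply: (derivation_annihilator_eq0 bowtie_norm_ge0 nrm_abs dense
            bowtie_in2_hom _ _ D_der) => b.
    exact: bowtie_in21_mul.
  exact: bowtie_in12_mul.
have cross21 x y : D (bowtie_in2 y) (bowtie_in1 x) = 0.
  apply: (derivation_annihilator_eq0 bowtie_norm_ge0 nrm_abs dense
            bowtie_in1_hom _ _ D_der) => b.
    exact: bowtie_in12_mul.
  exact: bowtie_in21_mul.
rewrite {1}[c]bowtie_decomp {1}[z]bowtie_decomp (derivationDl D_der).
by rewrite !(derivationDr D_der) cross12 cross21 addr0 add0r.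
Qed.

End Bowtie.

Theorem theorem6p11 (K : fieldType) (nrm : K -> R) (A : lmodType K)
    (mul : A -> A -> A) (nA : A -> R) :
  is_absval nrm ->
  is_banach_algebra nrm mul nA ->
  square_dense mul nA ->
  H1_iso_direct_sum
    (is_bdd_derivation nrm (bowtie_mul mul) (bowtie_norm nA))
    (is_inner_derivation nrm (bowtie_mul mul) (bowtie_norm nA))
    (is_bdd_derivation nrm mul nA)
    (is_inner_derivation nrm mul nA).
Proof.
move=> nrm_abs A_ba dense; have [_ nrm_eq0 _ nrm_triangle] := nrm_abs.
have nrm0 : nrm 0 = R0 by apply/nrm_eq0.
have bnorm_ge0 := bowtie_norm_ge0 A_ba.
have [in1 in2] := (bowtie_in1_hom nrm_abs A_ba, bowtie_in2_hom nrm_abs A_ba).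
have [out1 out2] := (bowtie_out1_hom A_ba, bowtie_out2_hom A_ba).
exists (fun D => ((fun x y => D (bowtie_in1 x) (bowtie_in1 y)),
                  (fun x y => D (bowtie_in2 x) (bowtie_in2 y)))); split => //.
- by move=> D D_der; split; exact: derivation_comp D_der.
- move=> D1 D2 D1_der D2_der.
  exists (fun c z => D1 c.1 z.1 + D2 (bowtie_out2 c) (bowtie_out2 z)); split.
    exact (derivation_add nrm_triangle bnorm_ge0
             (derivation_comp (ba_norm_ge0 A_ba) out1 D1_der)
             (derivation_comp (ba_norm_ge0 A_ba) out2 D2_der)).
  split; apply: inner_derivation_eq0 nrm0 _ => x y; rewrite /bowtie_out2 /=.
    by rewrite !subrr (derivation0l D2_der) addr0 subrr.
  by rewrite !add0r (derivation0l D1_der) add0r subrr.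
- move=> D D_der; split.
    case=> D1_inner D2_inner.
    exact (inner_derivation_add nrm_triangle bnorm_ge0
             (bowtie_derivation_split nrm_abs A_ba dense D_der)
             (inner_derivation_comp (ba_norm_ge0 A_ba) out1 D1_inner)
             (inner_derivation_comp (ba_norm_ge0 A_ba) out2 D2_inner)).
  by move=> D_inner; split; exact: inner_derivation_comp D_inner.
Qed.
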